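(* Let $K$ be an algebraically closed field of characteristic zero, $\mathcal{K}=K(t)$, and $\phi_2(z) := \frac{(t+1)(z-1)}{z+t}$, viewed as a self-map of $\mathbb{P}^1(\mathcal{K})$. Let $k \ge 1$. Then $v_\infty(\phi_2^k(0)) = v_\infty(\phi_2^k(1/2)) = 0$, and $v_\infty(k\phi_2^k(\infty) - t) \ge 0$.
   Context: For $g \in K(t)$, $v_\infty(g) = \deg(\text{denominator}) - \deg(\text{numerator})$ (the valuation at the place $t=\infty$). Note $\phi_2(\infty) = t+1$. *)

From HB Require Import structures.
From mathcomp Require Import all_boot all_order all_algebra.
From mathcomp Require Import generic_quotient fraction.
Set Implicit Arguments. Unset Strict Implicit. Unset Printing Implicit Defensive.
Import Order.TTheory GRing.Theory Num.Theory.
Local Open Scope ring_scope.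

Definition ratfun (K : fieldType) := {fraction {poly K}}.
Definition tvar (K : fieldType) : ratfun K := tofrac 'X.

(* Valuation at t = oo: v(p/q) = deg q - deg p (= size q - size p).
   None encodes +oo (the valuation of 0). Independent of the representative. *)
Definition vinf (K : fieldType) (g : ratfun K) : option int :=
  let r := repr g in
  if (frac r).1 == 0 then None
  else Some ((size (frac r).2)%:Z - (size (frac r).1)%:Z).

Definition vinf_ge0 (K : fieldType) (g : ratfun K) : bool :=
  if vinf g is Some v then (0 <= v)%R else true.

(* P^1(K(t)) as option (ratfun K), None = the point at infinity. *)
(* phi_2(z) = (t+1)(z-1)/(z+t), phi_2(oo) = t+1 (numerator and denominator
   never vanish simultaneously). *)
Definition phi2 (K : fieldType) (z : option (ratfun K)) : option (ratfun K) :=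
  match z with
  | None => Some (tvar K + 1)
  | Some x => if x + tvar K == 0 then None
              else Some ((tvar K + 1) * (x - 1) / (x + tvar K))
  end.

From HB Require Import structures.
From mathcomp Require Import all_boot all_order all_algebra.
From mathcomp Require Import generic_quotient fraction.
From mathcomp Require Import zify ring.

Set Implicit Arguments.
Unset Strict Implicit.
Unset Printing Implicit Defensive.

Import Order.TTheory GRing.Theory Num.Theory.
Local Open Scope ring_scope.
Local Open Scope quotient_scope.

(* Writing z = a/b with a, b in K[t], phi_2 acts linearly on the pair:
   (a, b) |-> ((t+1)(a - b), a + t b).  Only the top terms matter: starting
   from constants (c, d) the j-th iterate has top terms ((c - j d) t^j, d t^j),
   and starting from phi_2(oo) = (t+1)/1 it has top terms (t^(j+1), (j+1) t^j).
   Equal degrees give valuation 0 at infinity, and in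
   k phi_2^k(oo) - t = (k a - t b)/b the terms of degree k cancel, so the
   numerator has degree below that of b. *)

Lemma tofrac_numden (R : idomainType) (x : {ratio R}) :
  \pi_{fraction R} x * tofrac \d_x = tofrac \n_x.
Proof.
unlock tofrac; rewrite !piE; apply/eqP; rewrite FracField.equivf_def.
rewrite /FracField.mulf /= !numden_Ratio ?mulf_neq0 ?oner_eq0 ?denom_ratioP //.
by rewrite !mulr1 mulrC.
Qed.

Lemma vinf_frac (K : fieldType) (a b : {poly K}) : b != 0 ->
  vinf (tofrac a / tofrac b : ratfun K) =
  if a == 0 then None else Some ((size b)%:Z - (size a)%:Z).
Proof.
move=> b0; rewrite /vinf; set g := (tofrac a / tofrac b : ratfun K).
have := tofrac_numden (repr g); rewrite reprK.
set n := \n_(repr g); set d := \d_(repr g).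
have d0 : d != 0 by apply: denom_ratioP.
have Fb0 : tofrac b != 0 :> ratfun K by rewrite tofrac_eq0.
move=> /(congr1 (fun u => u * tofrac b)); rewrite /g mulrAC divfK //.
rewrite -!tofracM => /eqP; rewrite tofrac_eq => /eqP ad_nb.
have [a0|a0] := eqVneq a 0.
  move: ad_nb; rewrite a0 mul0r => /esym/eqP.
  by rewrite mulf_eq0 (negPf b0) orbF => ->.
have n0 : n != 0.
  by apply: contra_neq (mulf_neq0 a0 d0) => n0; rewrite ad_nb n0 mul0r.
rewrite (negPf n0); congr Some.
move: (congr1 (fun p : {poly K} => size p) ad_nb); rewrite !size_mul //.
have := size_poly_gt0 a; have := size_poly_gt0 b.
have := size_poly_gt0 n; have := size_poly_gt0 d.
rewrite a0 b0 n0 d0; move: (size a) (size b) (size n) (size d); lia.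
Qed.

Lemma vinf_ge0_frac (K : fieldType) (a b : {poly K}) : b != 0 ->
  (size a <= size b)%N -> vinf_ge0 (tofrac a / tofrac b : ratfun K).
Proof.
move=> b0 ab; rewrite /vinf_ge0 vinf_frac //.
by case: eqP; rewrite // subr_ge0 lez_nat.
Qed.

Lemma divD_mul (L : fieldType) (a b t : L) : b != 0 ->
  a / b + t = (a + t * b) / b.
Proof. by move=> b0; field. Qed.

Lemma phi2_div (L : fieldType) (a b t : L) : b != 0 -> a + t * b != 0 ->
  (t + 1) * (a / b - 1) / (a / b + t) = (t + 1) * (a - b) / (a + t * b).
Proof. by move=> b0 c0; field; rewrite b0 c0. Qed.

Lemma mulr_div_subr (L : fieldType) (m a b t : L) : b != 0 ->
  m * (a / b) - t = (m * a - t * b) / b.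
Proof. by move=> b0; field. Qed.

Section Phi2Polynomial.
Variable K : fieldType.
Local Notation P := {poly K}.

Definition has_top (n : nat) (c : K) (p : P) :=
  (size p <= n.+1)%N && (p`_n == c).

Lemma has_top_size n c p : c != 0 -> has_top n c p -> size p = n.+1.
Proof.
move=> c0 /andP[sz /eqP pn]; apply/anti_leq; rewrite sz /=.
by apply: contraTT c0; rewrite -leqNgt negbK -pn => /leq_sizeP->.
Qed.

Lemma has_top0_size n p : has_top n 0 p -> (size p <= n)%N.
Proof.
case/andP=> /leq_sizeP sz /eqP pn; apply/leq_sizeP => j.
by rewrite leq_eqVlt => /orP[/eqP<- | /sz].
Qed.

Lemma has_top_widen n c p : has_top n c p -> has_top n.+1 0 p.
Proof.
by case/andP=> sz _; rewrite /has_top (leq_trans sz) //= nth_default.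
Qed.

Lemma has_topC c : has_top 0 c c%:P.
Proof. by rewrite /has_top size_polyC_leq1 coefC /= eqxx. Qed.

Lemma has_topD n u w p q :
  has_top n u p -> has_top n w q -> has_top n (u + w) (p + q).
Proof.
case/andP=> sp /eqP pn /andP[sq /eqP qn].
by rewrite /has_top coefD pn qn eqxx (leq_trans (size_polyD _ _)) // geq_max sp.
Qed.

Lemma has_topN n c p : has_top n c p -> has_top n (- c) (- p).
Proof. by rewrite /has_top size_polyN coefN eqr_opp. Qed.

Lemma has_topZ n c a p : has_top n c p -> has_top n (a * c) (a *: p).
Proof.
case/andP=> sp /eqP pn.
by rewrite /has_top coefZ pn eqxx (leq_trans (size_scale_leq _ _)).
Qed.

Lemma has_topXM n c p : has_top n c p -> has_top n.+1 c ('X * p).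
Proof.
case/andP=> sp /eqP pn; rewrite /has_top coefXM pn eqxx andbT.
by rewrite (leq_trans (size_polyMleq _ _)) // size_polyX.
Qed.

Lemma has_topX1M n c p : has_top n c p -> has_top n.+1 c (('X + 1) * p).
Proof.
move=> hp; rewrite mulrDl mul1r -[c]addr0.
exact: has_topD (has_topXM hp) (has_top_widen hp).
Qed.

Definition phi2_poly (p : P * P) : P * P :=
  (('X + 1) * (p.1 - p.2), p.1 + 'X * p.2).

Definition frac_of (p : P * P) : ratfun K := tofrac p.1 / tofrac p.2.

Lemma phi2_frac_of p : p.2 != 0 -> (phi2_poly p).2 != 0 ->
  phi2 (Some (frac_of p)) = Some (frac_of (phi2_poly p)).
Proof.
case: p => a b /= b0 c0; rewrite /phi2 /frac_of /tvar /=.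
have Fb0 : tofrac b != 0 :> ratfun K by rewrite tofrac_eq0.
have Fc0 : tofrac a + tofrac 'X * tofrac b != 0 :> ratfun K.
  by rewrite -tofracM -tofracD tofrac_eq0.
rewrite {1}(divD_mul (tofrac a) (tofrac 'X) Fb0).
rewrite mulf_eq0 invr_eq0 (negPf Fc0) (negPf Fb0) /= (phi2_div Fb0 Fc0).
by congr Some; rewrite tofracM tofracD tofracB tofrac1 tofracD tofracM.
Qed.

Lemma iter_phi2_frac_of p n : (forall j, (iter j phi2_poly p).2 != 0) ->
  iter n (@phi2 K) (Some (frac_of p)) = Some (frac_of (iter n phi2_poly p)).
Proof.
move=> b0; elim: n => [|n IHn] //=.
by rewrite IHn phi2_frac_of // -iterS.
Qed.

Lemma has_top_phi2_poly_level n u w p : has_top n u p.1 -> has_top n w p.2 ->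
  has_top n.+1 (u - w) (phi2_poly p).1 /\ has_top n.+1 w (phi2_poly p).2.
Proof.
move=> ha hb; split.
  by apply: has_topX1M; apply: has_topD ha (has_topN hb).
by rewrite -[w]add0r; apply: has_topD (has_top_widen ha) (has_topXM hb).
Qed.

Lemma has_top_phi2_poly_shift n u w p : has_top n.+1 u p.1 -> has_top n w p.2 ->
  has_top n.+2 u (phi2_poly p).1 /\ has_top n.+1 (u + w) (phi2_poly p).2.
Proof.
move=> ha hb; split; last exact: has_topD ha (has_topXM hb).
apply: has_topX1M; rewrite -[u]subr0.
exact: has_topD ha (has_topN (has_top_widen hb)).
Qed.

Lemma has_top_iter_level n u w p j : has_top n u p.1 -> has_top n w p.2 ->
  has_top (j + n) (u - j%:R * w) (iter j phi2_poly p).1 /\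
  has_top (j + n) w (iter j phi2_poly p).2.
Proof.
move=> ha hb; elim: j => [|j [IHa IHb]]; first by rewrite mul0r subr0; split.
have [ha' hb'] := has_top_phi2_poly_level IHa IHb.
by rewrite iterS addSn mulrSr mulrDl mul1r opprD addrA; split.
Qed.

Lemma has_top_iter_shift n u w p j : has_top n.+1 u p.1 -> has_top n w p.2 ->
  has_top (j + n).+1 u (iter j phi2_poly p).1 /\
  has_top (j + n) (w + j%:R * u) (iter j phi2_poly p).2.
Proof.
move=> ha hb; elim: j => [|j [IHa IHb]]; first by rewrite mul0r addr0; split.
have [ha' hb'] := has_top_phi2_poly_shift IHa IHb.
by rewrite iterS addSn mulrSr mulrDl mul1r addrA [_ + u]addrC; split.
Qed.

Lemma vinf_iter_phi2_const (c d : K) k : d != 0 -> c - k%:R * d != 0 ->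
  exists g, iter k (@phi2 K) (Some (frac_of (c%:P, d%:P))) = Some g /\
            vinf g = Some 0%Z.
Proof.
move=> d0 ck0; set p := (c%:P, d%:P).
have top j := @has_top_iter_level 0 c d p j (has_topC c) (has_topC d).
have b0 j : (iter j phi2_poly p).2 != 0.
  by rewrite -size_poly_gt0 (has_top_size d0 (top j).2).
exists (frac_of (iter k phi2_poly p)); split; first exact: iter_phi2_frac_of.
have [ha hb] := top k.
rewrite /frac_of vinf_frac // -size_poly_eq0 (has_top_size ck0 ha).
by rewrite (has_top_size d0 hb) subrr.
Qed.

Lemma vinf_ge0_iter_phi2_infty (hchar : [pchar K] =i pred0) k :
  exists g, iter k.+1 (@phi2 K) None = Some g /\
            vinf_ge0 (k.+1%:R * g - tvar K).
Proof.
have nat_neq0 n : n.+1%:R != 0 :> K by rewrite (pcharf0P K).1.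
set p : P * P := ('X + 1, 1).
have hX1 : has_top 1 1 p.1.
  by rewrite /has_top /p /= -polyC1 size_XaddC coefD coefX coefC /= addr0 eqxx.
have top j := @has_top_iter_shift 0 1 1 p j hX1 (has_topC 1).
have b0 j : (iter j phi2_poly p).2 != 0.
  by rewrite -size_poly_gt0 (has_top_size _ (top j).2) // mulr1 nat1r.
exists (frac_of (iter k phi2_poly p)); split.
  rewrite iterSr -(iter_phi2_frac_of _ b0); congr iter.
  by rewrite /= /frac_of /= tofracD !tofrac1 divr1.
have [ha hb] := top k; rewrite addn0 mulr1 nat1r in ha hb.
rewrite /frac_of mulr_div_subr ?tofrac_eq0 // /tvar.
rewrite -tofrac1 -tofracMn -!tofracM -tofracB vinf_ge0_frac //.
rewrite (has_top_size _ hb) // has_top0_size //.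
have := has_topD (has_topZ k.+1%:R ha) (has_topN (has_topXM hb)).
by rewrite mulr1 subrr scaler_nat -mulr_natl.
Qed.

End Phi2Polynomial.

Theorem lemma5p16 (K : closedFieldType) (hchar : [pchar K] =i pred0)
  (k : nat) (hk : (1 <= k)%N) :
  (exists g : ratfun K, iter k (@phi2 K) (Some 0) = Some g /\ vinf g = Some 0%Z) /\
  (exists g : ratfun K, iter k (@phi2 K) (Some (2%:R^-1)) = Some g /\ vinf g = Some 0%Z) /\
  (exists g : ratfun K, iter k (@phi2 K) None = Some g /\
     vinf_ge0 (k%:R * g - tvar K)).
Proof.
have nat_eq0 := (pcharf0P K).1 hchar.
case: k hk => // j _; split; [|split]; last exact: vinf_ge0_iter_phi2_infty.
- have -> : 0 = frac_of (0%:P, 1%:P) :> ratfun K.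
    by rewrite /frac_of /= polyC0 tofrac0 mul0r.
  apply: vinf_iter_phi2_const; first exact: oner_neq0.
  by rewrite sub0r oppr_eq0 mulr1 nat_eq0.
- have -> : 2%:R^-1 = frac_of (1%:P, 2%:R%:P) :> ratfun K.
    by rewrite /frac_of /= polyC1 polyC_natr tofrac1 mul1r tofracMn tofrac1.
  apply: vinf_iter_phi2_const; first by rewrite nat_eq0.
  rewrite -natrM subr_eq0 eq_sym -subr_eq0 mulnC mul2n doubleS.
  by rewrite -natr1 addrK nat_eq0.
Qed.
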